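(* Let $f:\mathbb{R}^d\to\mathbb{R}$ be convex and $L$-smooth with a minimizer $x^\star$, and let $x_0\in\mathbb{R}^d$ satisfy $f(x_0)-f(x^\star)\le\Delta_0$. Fix an integer $N\ge1$, let $v_0=\mathbf{0}$ and for $k=0,\dots,N-1$, $$v_{k+1}=v_k+\frac{12}{L(N-k+1)(N-k+2)(N-k+3)}\nabla f(x_k),\qquad x_{k+1}=x_k-\frac1L\nabla f(x_k)-\frac{(N-k)(N-k+1)(N-k+2)}{6}v_{k+1}.$$ Define $\delta_{k+1}=\frac{12}{(N-k+1)(N-k+2)(N-k+3)}$ for $k=0,\dots,N$. Then $$\sum_{k=0}^{N}\frac{\delta_{k+1}}{2}\|\nabla f(x_k)\|^2\le\frac{12L\Delta_0}{(N+2)(N+3)}.$$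
   Context: $L$-smooth means $\|\nabla f(x)-\nabla f(y)\|\le L\|x-y\|$ for all $x,y$; $\|\cdot\|$ is the Euclidean norm. The iteration is called the memory-saving OGM-G (M-OGM-G). *)

From HB Require Import structures.
From mathcomp Require Import all_boot all_order all_algebra.
From mathcomp Require Import all_classical all_reals all_analysis.
Set Implicit Arguments. Unset Strict Implicit. Unset Printing Implicit Defensive.
Import Order.TTheory GRing.Theory Num.Theory.
Import numFieldNormedType.Exports.
Local Open Scope ring_scope.

Definition dotv {R : realType} {d : nat} (u v : 'rV[R]_d) : R :=
  \sum_(i < d) u 0 i * v 0 i.
Definition enorm {R : realType} {d : nat} (u : 'rV[R]_d) : R :=
  Num.sqrt (dotv u u).

Definition is_gradient {R : realType} {d : nat}
  (f : 'rV[R]_d -> R) (g : 'rV[R]_d -> 'rV[R]_d) : Prop :=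
  forall x, differentiable f x /\ forall h, 'd f x h = dotv (g x) h.

Definition convex_fun {R : realType} {d : nat} (f : 'rV[R]_d -> R) : Prop :=
  forall (x y : 'rV[R]_d) (t : R), 0 <= t -> t <= 1 ->
    f (t *: x + (1 - t) *: y) <= t * f x + (1 - t) * f y.

Definition L_smooth {R : realType} {d : nat} (L : R) (g : 'rV[R]_d -> 'rV[R]_d) : Prop :=
  forall x y, enorm (g x - g y) <= L * enorm (x - y).

Fixpoint mogmg_state {R : realType} {d : nat} (g : 'rV[R]_d -> 'rV[R]_d)
  (L : R) (N : nat) (x0 : 'rV[R]_d) (k : nat) : 'rV[R]_d * 'rV[R]_d :=
  match k with
  | 0 => (x0, 0)
  | k'.+1 =>
      let: (x, v) := mogmg_state g L N x0 k' in
      let v' := v + (12 / (L * ((N - k' + 1)%:R * (N - k' + 2)%:R * (N - k' + 3)%:R)))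
                      *: g x in
      (x - L^-1 *: g x - (((N - k')%:R * (N - k' + 1)%:R * (N - k' + 2)%:R) / 6) *: v', v')
  end.

Definition mogmg_x {R : realType} {d : nat} g L N x0 k : 'rV[R]_d :=
  (@mogmg_state R d g L N x0 k).1.

Definition mogmg_delta {R : realType} (N k : nat) : R :=
  12 / ((N - k + 1)%:R * (N - k + 2)%:R * (N - k + 3)%:R).

From HB Require Import structures.
From mathcomp Require Import all_boot all_order all_algebra.
From mathcomp Require Import all_classical all_reals all_analysis.
From mathcomp Require Import ring lra.
Import Order.TTheory GRing.Theory Num.Theory.
Import numFieldNormedType.Exports.
Local Open Scope classical_set_scope.
Local Open Scope ring_scope.

(* A quadratic potential Phi_k in
   (x_k, v_k, g_k), whose coefficients depend on the number r = N - k of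
   remaining steps, increases along the iteration by exactly
   delta_{k+1} |g_k|^2 / (2L) plus a nonnegative combination of interpolation
   gaps f x - f y - <g y, x - y> - |g x - g y|^2 / (2L), which are nonnegative
   for convex L-smooth f.  Telescoping, and evaluating Phi_0 and Phi_N, bounds
   the weighted sum of squared gradients by
   L lambda_N (f x_0 - f x_N + (|g_0|^2 + |g_N|^2) / (2L)) with
   lambda_N = 6 / ((N + 2) (N + 3)); finally |g x|^2 / (2L) <= f x - f x*
   makes this at most 2 L lambda_N Delta_0. *)

Section InnerProduct.
Context {R : realType} {d : nat}.
Local Notation V := 'rV[R]_d.

Lemma dotvC (u v : V) : dotv u v = dotv v u.
Proof. by apply: eq_bigr => i _; rewrite mulrC. Qed.

Lemma dotvDl (u w v : V) : dotv (u + w) v = dotv u v + dotv w v.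
Proof.
by rewrite /dotv -big_split; apply: eq_bigr => i _; rewrite mxE mulrDl.
Qed.

Lemma dotvZl (c : R) (u v : V) : dotv (c *: u) v = c * dotv u v.
Proof. by rewrite /dotv mulr_sumr; apply: eq_bigr => i _; rewrite mxE mulrA. Qed.

Lemma dotvNl (u v : V) : dotv (- u) v = - dotv u v.
Proof. by rewrite -scaleN1r dotvZl mulN1r. Qed.

Lemma dotvBl (u w v : V) : dotv (u - w) v = dotv u v - dotv w v.
Proof. by rewrite dotvDl dotvNl. Qed.

Lemma dotvDr (v u w : V) : dotv v (u + w) = dotv v u + dotv v w.
Proof. by rewrite dotvC dotvDl !(dotvC v). Qed.

Lemma dotvZr (c : R) (v u : V) : dotv v (c *: u) = c * dotv v u.
Proof. by rewrite dotvC dotvZl dotvC. Qed.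

Lemma dotvNr (v u : V) : dotv v (- u) = - dotv v u.
Proof. by rewrite dotvC dotvNl dotvC. Qed.

Lemma dotvBr (v u w : V) : dotv v (u - w) = dotv v u - dotv v w.
Proof. by rewrite dotvDr dotvNr. Qed.

Lemma dotv0l (v : V) : dotv 0 v = 0.
Proof. by rewrite -(scale0r 0) dotvZl mul0r. Qed.

Lemma dotvv_ge0 (u : V) : 0 <= dotv u u.
Proof. by apply: sumr_ge0 => i _; rewrite -expr2 sqr_ge0. Qed.

Lemma enormZ (c : R) (u : V) : enorm (c *: u) = `|c| * enorm u.
Proof.
by rewrite /enorm dotvZl dotvZr mulrA -expr2 sqrtrM ?sqr_ge0 // sqrtr_sqr.
Qed.

Lemma enorm_sqr (u : V) : enorm u ^+ 2 = dotv u u.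
Proof. by rewrite sqr_sqrtr // dotvv_ge0. Qed.

(* Expanding [|a -+ m v|^2 >= 0] and using [|a|^2 <= m^2 |v|^2]. *)
Lemma normr_dotv_le (a v : V) (m : R) :
  0 < m -> enorm a <= m * enorm v -> `|dotv a v| <= m * dotv v v.
Proof.
move=> m_gt0 le_av.
have le_aa : dotv a a <= m ^+ 2 * dotv v v.
  rewrite -!enorm_sqr -exprMn; apply: lerXn2r => //; rewrite ?nnegrE //.
    exact: sqrtr_ge0.
  by rewrite mulr_ge0 ?sqrtr_ge0 // ltW.
have := dotvv_ge0 (a - m *: v); have := dotvv_ge0 (a + m *: v).
rewrite !(dotvDl, dotvDr, dotvNl, dotvNr, dotvZl, dotvZr) (dotvC v a).
have := dotvv_ge0 v; rewrite ler_norml; move: le_aa.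
set P := dotv a a; set Q := dotv a v; set S := dotv v v.
move=> *; apply/andP; split; nra.
Qed.

End InnerProduct.

(* Mean value theorem applied to [h s - M s^2 / 2]. *)
Lemma increment_le_of_derive_le {R : realType} (h h' : R -> R) (M : R) :
  (forall s : R, is_derive s 1 h (h' s)) ->
  (forall s, 0 < s < 1 -> h' s <= M * s) ->
  h 1 - h 0 <= M / 2.
Proof.
move=> dh le_h'.
pose k := h - (M / 2) \*: @id R ^+ 2.
have dk (s : R) : is_derive s 1 k (h' s - M * s).
  apply: is_derive_eq (is_deriveB (dh s)
                        (is_deriveZ (M / 2) (is_deriveX 2 (is_derive_id s 1)))) _.
  have scaleE (a b : R) : a *: b = a * b by [].
  by rewrite !scaleE expr1 mulr1; field.
have k_cont : {within `[0, 1], continuous k}.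
  by apply: derivable_within_continuous => s _; case: (dk s).
have [c /[!in_itv] /le_h' le_c] := MVT ltr01 (fun s _ => dk s) k_cont.
have kE s : k s = h s - M / 2 * s ^+ 2 by [].
rewrite !kE expr1n expr0n /= mulr0 !subr0 !mulr1; lra.
Qed.

Lemma ler_of_forall_subM {R : realFieldType} (a b c : R) :
  0 <= b -> (forall t, 0 < t <= 1 -> a - t * b <= c) -> a <= c.
Proof.
move=> b_ge0 le_abc; apply/ler_addgt0Pr => e e_gt0.
have eb_gt0 : 0 < e + b by rewrite ltr_wpDr.
have t01 : 0 < e / (e + b) <= 1 by rewrite divr_gt0 // ler_pdivrMr // mul1r lerDl.
have tb : e / (e + b) * b <= e.
  by rewrite mulrAC ler_pdivrMr // ler_pM2l // lerDr ltW.
by have := le_abc _ t01; lra.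
Qed.

Section SmoothFunctions.
Context {R : realType} {d : nat}.
Local Notation V := 'rV[R]_d.
Context {f : V -> R} {g : V -> V} {L : R}.
Hypotheses (L_gt0 : 0 < L) (fg : is_gradient f g) (gL : L_smooth L g).

Lemma is_derive_line (x v : V) (t : R) :
  is_derive t 1 (fun s : R => f (x + s *: v)) (dotv (g (x + t *: v)) v).
Proof.
have [df dfE] := fg (x + t *: v).
have line_diff : is_diff t (cst x + ( *:%R^~ v) : R -> V) (0 + ( *:%R^~ v))
  := is_diffD (is_diff_cst x t) (is_diff_scalel t v).
have dline : differentiable (cst x + ( *:%R^~ v) : R -> V) t by exact: ex_diff.
apply: DeriveDef; first exact/diff_derivable/differentiable_comp.
rewrite deriveE; last exact: differentiable_comp.
rewrite (diff_comp dline df) /= diff_val dfE.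
by congr dotv; rewrite /= add0r scale1r.
Qed.

Lemma smooth_dotv_bound (x v : V) (c : R) :
  0 < c -> `|dotv (g (x + c *: v) - g x) v| <= c * L * dotv v v.
Proof.
move=> c_gt0; apply: normr_dotv_le; first exact: mulr_gt0.
have := gL (x + c *: v) x; rewrite addrAC subrr add0r enormZ gtr0_norm //.
by rewrite mulrCA mulrA.
Qed.

Lemma smooth_quadratic_bound (x z : V) :
  `|f z - f x - dotv (g x) (z - x)| <= L / 2 * dotv (z - x) (z - x).
Proof.
set v := z - x; have -> : z = x + 1 *: v by rewrite scale1r addrC subrK.
set A := dotv (g x) v; set S := dotv v v.
pose h s := f (x + s *: v) - s * A.
pose h' s := dotv (g (x + s *: v) - g x) v.
have dh (s : R) : is_derive s 1 h (h' s).
  apply: is_derive_eq (is_deriveB (is_derive_line x v s)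
                        (is_deriveM (is_derive_id s 1) (is_derive_cst A s 1))) _.
  by rewrite /h' dotvBl scaler0 add0r [_%:A]mulr1.
have h'_bound s : 0 < s < 1 -> `|h' s| <= L * S * s.
  by case/andP=> s_gt0 _; rewrite mulrC mulrA; exact: smooth_dotv_bound.
have le_h' s : 0 < s < 1 -> h' s <= L * S * s by move/h'_bound/ler_normlW.
have ge_h' s : 0 < s < 1 -> - h' s <= L * S * s.
  by move/h'_bound; rewrite -normrN => /ler_normlW.
have := increment_le_of_derive_le _ _ _ dh le_h'.
have := increment_le_of_derive_le _ _ _ (fun s => is_deriveN (dh s)) ge_h'.
have hN s : (- h) s = - h s by [].
rewrite !hN /h scale0r addr0 mul0r subr0 mul1r ler_norml.
by move=> *; apply/andP; split; lra.
Qed.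

Lemma smooth_upper_bound (x z : V) :
  f z <= f x + dotv (g x) (z - x) + L / 2 * dotv (z - x) (z - x).
Proof. by have /ler_normlW := smooth_quadratic_bound x z; lra. Qed.

Lemma gradient_sqr_le_gap (xs x : V) :
  (forall y, f xs <= f y) -> dotv (g x) (g x) / (2 * L) <= f x - f xs.
Proof.
move=> xs_min; have := smooth_upper_bound x (x - L^-1 *: g x).
have -> : x - L^-1 *: g x - x = - (L^-1 *: g x) by rewrite addrC addKr.
rewrite !(dotvNl, dotvNr, dotvZl, dotvZr) opprK.
have := xs_min (x - L^-1 *: g x); set G := dotv (g x) (g x).
have L_neq0 : L != 0 by rewrite gt_eqF.
have -> : L / 2 * (L^-1 * (L^-1 * G)) = L^-1 * G / 2 by field.
have -> : G / (2 * L) = L^-1 * G / 2 by field.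
lra.
Qed.

Hypothesis fconv : convex_fun f.

(* Convexity bounds the difference quotient of f along [x, z] by [f z - f x];
   the lower quadratic bound shows that it tends to [<g x, z - x>]. *)
Lemma convex_gradient_le (x z : V) : f x + dotv (g x) (z - x) <= f z.
Proof.
set v := z - x; set A := dotv (g x) v; set S := dotv v v.
suff : A <= f z - f x by lra.
apply: (@ler_of_forall_subM _ _ (L / 2 * S)).
  by rewrite mulr_ge0 ?dotvv_ge0 // divr_ge0 // ltW.
move=> t /andP[t_gt0 t_le1]; rewrite -(ler_pM2l t_gt0).
have := fconv z x t (ltW t_gt0) t_le1.
have -> : t *: z + (1 - t) *: x = x + t *: v.
  by rewrite /v scalerBl scale1r scalerBr addrCA addrA.
have := smooth_quadratic_bound x (x + t *: v).
have -> : x + t *: v - x = t *: v by rewrite addrC addKr.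
rewrite !(dotvZl, dotvZr) -/A -/S ler_norml => /andP[lo _].
lra.
Qed.

(* Convexity at y and the upper quadratic bound at x, both evaluated at
   [z = x - (g x - g y) / L]. *)
Lemma smooth_convex_interpolation (x y : V) :
  f y + dotv (g y) (x - y) + dotv (g x - g y) (g x - g y) / (2 * L) <= f x.
Proof.
have := dotvBl (g x) (g y) (g x - g y).
have := convex_gradient_le y (x - L^-1 *: (g x - g y)).
have := smooth_upper_bound x (x - L^-1 *: (g x - g y)).
have -> : x - L^-1 *: (g x - g y) - x = - (L^-1 *: (g x - g y)).
  by rewrite addrC addKr.
rewrite addrAC; move: (g x - g y) => w.
rewrite !(dotvNl, dotvNr, dotvZl, dotvZr, dotvBr) opprK.
set W := dotv w w; set Gx := dotv (g x) w; set Gy := dotv (g y) w.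
have L_neq0 : L != 0 by rewrite gt_eqF.
have -> : L / 2 * (L^-1 * (L^-1 * W)) = L^-1 * W / 2 by field.
have -> : W / (2 * L) = L^-1 * W / 2 by field.
move=> ? ? /(congr1 (fun r => L^-1 * r)); rewrite mulrBr.
lra.
Qed.

End SmoothFunctions.

Section Potential.
Context {R : realType} {d : nat}.
Local Notation V := 'rV[R]_d.

Definition lambda_coef (r : R) : R := 6 / ((r + 2) * (r + 3)).

Definition delta_coef (r : R) : R := 12 / ((r + 1) * (r + 2) * (r + 3)).

Definition interp_gap (L fx fy : R) (x y gx gy : V) : R :=
  fx - fy - dotv gy (x - y) - dotv (gx - gy) (gx - gy) / (2 * L).

Definition mogmg_potential (L r fx fN : R) (x v gx xN gN : V) : R :=
  - lambda_coef r * (fx - fN + (dotv gx gx + dotv gN gN) / (2 * L))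
  - dotv v (L *: (xN - x) + (r + 1) *: gx - gN)
  - r * (r + 1) * (r + 2) * (r + 3) / 24 * L * dotv v v.

Lemma mogmg_potential_step (L r fx fx' fN : R) (x x' v v' gx gx' xN gN : V) :
  0 < L -> 0 <= r ->
  v' = v + (12 / (L * ((r + 1) * (r + 2) * (r + 3)))) *: gx ->
  x' = x - L^-1 *: gx - (r * (r + 1) * (r + 2) / 6) *: v' ->
  mogmg_potential L (r - 1) fx' fN x' v' gx' xN gN
    - mogmg_potential L r fx fN x v gx xN gN
  = lambda_coef (r - 1) * interp_gap L fx fx' x x' gx gx'
    + delta_coef r * interp_gap L fN fx xN x gN gx
    + delta_coef r * dotv gx gx / (2 * L).
Proof.
move=> L_gt0 r_ge0 -> ->.
rewrite /mogmg_potential /interp_gap /lambda_coef /delta_coef.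
rewrite !(dotvDl, dotvDr, dotvNl, dotvNr, dotvZl, dotvZr).
(* Orient every inner product along x, v, gx, gx', xN, gN, so that [field]
   faces a polynomial identity in independent atoms. *)
rewrite ?(dotvC v x) ?(dotvC gx x) ?(dotvC gx' x) ?(dotvC xN x) ?(dotvC gN x).
rewrite ?(dotvC gx v) ?(dotvC gx' v) ?(dotvC xN v) ?(dotvC gN v).
rewrite ?(dotvC gx' gx) ?(dotvC xN gx) ?(dotvC gN gx).
rewrite ?(dotvC xN gx') ?(dotvC gN gx') ?(dotvC gN xN).
have r1 : r + 1 != 0 by rewrite gt_eqF // ltr_pwDr.
have r2 : r + 2 != 0 by rewrite gt_eqF // ltr_pwDr.
have r3 : r + 3 != 0 by rewrite gt_eqF // ltr_pwDr.
have L_neq0 : L != 0 by rewrite gt_eqF.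
have -> : r - 1 + 2 = r + 1 by ring.
have -> : r - 1 + 3 = r + 2 by ring.
have -> : r - 1 + 1 = r by ring.
by field; rewrite L_neq0 r1 r2 r3.
Qed.

End Potential.

Section Iterates.
Context {R : realType} {d : nat}.
Local Notation V := 'rV[R]_d.
Variables (f : V -> R) (g : V -> V) (L : R) (N : nat) (x0 : V).
Hypotheses (L_gt0 : 0 < L) (fg : is_gradient f g) (fconv : convex_fun f)
  (gL : L_smooth L g).

Local Notation x k := (mogmg_x g L N x0 k).
Local Notation v k := (mogmg_state g L N x0 k).2.

Lemma mogmg_vS k :
  v k.+1 = v k + (12 / (L * ((N - k + 1)%:R * (N - k + 2)%:R * (N - k + 3)%:R)))
                   *: g (x k).
Proof. by rewrite /mogmg_x /=; case: mogmg_state. Qed.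

Lemma mogmg_xS k :
  x k.+1 = x k - L^-1 *: g (x k)
           - ((N - k)%:R * (N - k + 1)%:R * (N - k + 2)%:R / 6) *: v k.+1.
Proof. by rewrite /mogmg_x /=; case: mogmg_state. Qed.

Let Phi k := mogmg_potential L (N - k)%:R (f (x k)) (f (x N)) (x k) (v k)
  (g (x k)) (x N) (g (x N)).

Lemma mogmg_potential_increment k : (k < N)%N ->
  mogmg_delta N k / 2 * enorm (g (x k)) ^+ 2 <= L * (Phi k.+1 - Phi k).
Proof.
move=> lt_kN; set r : R := (N - k)%:R.
have r_ge0 : 0 <= r by [].
have rS : (N - k.+1)%:R = r - 1 by rewrite /r -(subnSK lt_kN) -natr1 addrK.
have vS := mogmg_vS k; have xS := mogmg_xS k; rewrite !natrD -/r in vS xS.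
rewrite /Phi rS mogmg_potential_step //.
have gap_ge0 y z : 0 <= interp_gap L (f y) (f z) y z (g y) (g z).
  have := smooth_convex_interpolation L_gt0 fg gL fconv y z.
  by rewrite /interp_gap; lra.
have lam_ge0 : 0 <= lambda_coef (r - 1) by rewrite divr_ge0 // mulr_ge0 //; lra.
have del_ge0 : 0 <= delta_coef r by rewrite divr_ge0 // !mulr_ge0 //; lra.
have -> : mogmg_delta N k = delta_coef r by rewrite /mogmg_delta !natrD.
rewrite enorm_sqr.
have -> : delta_coef r / 2 * dotv (g (x k)) (g (x k))
          = L * (delta_coef r * dotv (g (x k)) (g (x k)) / (2 * L)).
  by field; rewrite gt_eqF.
by rewrite ler_pM2l // lerDr; apply: addr_ge0; exact: mulr_ge0.
Qed.

Lemma mogmg_sum_le_potential :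
  \sum_(0 <= k < N) mogmg_delta N k / 2 * enorm (g (x k)) ^+ 2
  <= L * (Phi N - Phi 0).
Proof.
rewrite -telescope_sumr // mulr_sumr.
by apply: ler_sum_nat => k /andP[_]; exact: mogmg_potential_increment.
Qed.

Lemma mogmg_sum_bound :
  \sum_(0 <= k < N.+1) mogmg_delta N k / 2 * enorm (g (x k)) ^+ 2
  <= L * lambda_coef N%:R
       * (f x0 - f (x N)
          + (dotv (g x0) (g x0) + dotv (g (x N)) (g (x N))) / (2 * L)).
Proof.
have PhiN : Phi N = - dotv (g (x N)) (g (x N)) / L.
  rewrite /Phi subnn /mogmg_potential /lambda_coef mulr0n !subrr scaler0 !add0r.
  rewrite scale1r subrr.
  by rewrite dotvC dotv0l !mul0r !subr0; field; rewrite gt_eqF.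
have Phi0 : Phi 0 = - lambda_coef N%:R
    * (f x0 - f (x N)
       + (dotv (g x0) (g x0) + dotv (g (x N)) (g (x N))) / (2 * L)).
  rewrite /Phi subn0 /mogmg_potential [v 0]/= [x 0]/mogmg_x /=.
  by rewrite !dotv0l mulr0 !subr0.
have deltaN : mogmg_delta N N = 2 :> R by rewrite /mogmg_delta subnn; field.
rewrite big_nat_recr //= deltaN enorm_sqr.
have := mogmg_sum_le_potential; rewrite PhiN Phi0.
set W := _ + (_ + _) / _; set GN := dotv (g (x N)) (g (x N)).
have -> : L * (- GN / L - - lambda_coef N%:R * W) = L * lambda_coef N%:R * W - GN.
  by field; rewrite gt_eqF.
lra.
Qed.

End Iterates.

Theorem theorem2 (R : realType) (d : nat) (f : 'rV[R]_d -> R)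
  (g : 'rV[R]_d -> 'rV[R]_d) (L : R) (xstar x0 : 'rV[R]_d) (Delta0 : R) (N : nat) :
  0 < L ->
  is_gradient f g ->
  convex_fun f ->
  L_smooth L g ->
  (forall y, f xstar <= f y) ->
  f x0 - f xstar <= Delta0 ->
  (1 <= N)%N ->
  \sum_(0 <= k < N.+1) (mogmg_delta N k / 2) * enorm (g (mogmg_x g L N x0 k)) ^+ 2
    <= 12 * L * Delta0 / ((N + 2)%:R * (N + 3)%:R).
Proof.
move=> L_gt0 fg fconv gL xstar_min gap_x0 _.
apply: le_trans (mogmg_sum_bound f g L N x0 L_gt0 fg fconv gL) _.
have gap0 := gradient_sqr_le_gap L_gt0 fg gL xstar x0 xstar_min.
have gapN :=
  gradient_sqr_le_gap L_gt0 fg gL xstar (mogmg_x g L N x0 N) xstar_min.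
have lam_ge0 : 0 <= lambda_coef (N%:R : R) by rewrite divr_ge0 // mulr_ge0.
have -> : 12 * L * Delta0 / ((N + 2)%:R * (N + 3)%:R)
          = L * lambda_coef N%:R * (2 * Delta0).
  by rewrite /lambda_coef !natrD; field; rewrite !gt_eqF // ltr_wpDl.
apply: ler_wpM2l; first by rewrite mulr_ge0 // ltW.
rewrite mulrDl; lra.
Qed.
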